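(* For every ordinal $\alpha$ and every closed $\mathcal L$-term $t$: $(\mathbb N,T^*_\alpha,P^*_\alpha)\not\models_{SK}\mathrm P\ulcorner\mathrm Pt\urcorner\vee\mathrm P\ulcorner\neg\mathrm Pt\urcorner$. In particular, $P_0^{*-}\cap P_\infty^{*+}=\emptyset$, where $(T^*_\infty,P^*_\infty)$ is the stage at which the modified sequence stabilizes.
   Context: Language. Let $\mathcal L_{\mathbb N}$ be the language of first-order Peano arithmetic and $\mathcal L=\mathcal L_{\mathbb N}\cup\{\mathrm T,\mathrm P\}$ with unary predicates $\mathrm T,\mathrm P$. $\mathcal L$-formulas are in Tait style: literals are $s=t$, $s\neq t$, $\mathrm Tt$, $\neg\mathrm Tt$, $\mathrm Pt$, $\neg\mathrm Pt$; formulas are built from literals by $\wedge,\vee,\forall,\exists$; negation of an arbitrary formula is defined by De Morgan dualities with $\neg\neg\varphi:=\varphi$. A standard Gödel numbering is fixed; $\#e$ is the code of $e$, $\ulcorner e\urcorner$ the numeral of $\#e$, $\mathrm{val}(t)$ the value of a closed term $t$, $\dot\neg$ the primitive recursive function with $\dot\neg(\#\varphi)=\#\neg\varphi$; $\mathrm T\varphi,\mathrm P\varphi$ abbreviate $\mathrm T\ulcorner\varphi\urcorner,\mathrm P\ulcorner\varphi\urcorner$. Semantics. A partial model is $(\mathbb N,T,P)$ with $\mathbb N$ the standard model and $T=(T^+,T^-)$, $P=(P^+,P^-)$ pairs of subsets of $\omega$. Strong Kleene satisfaction $\models_{SK}$: arithmetic literals evaluated in $\mathbb N$; $\mathrm Tt$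 satisfied iff $\mathrm{val}(t)\in T^+$, $\neg\mathrm Tt$ iff $\mathrm{val}(t)\in T^-$, likewise for $\mathrm P$ with $P^\pm$; conjunction iff both, disjunction iff at least one, $\forall x\varphi(x)$ iff all numeral instances, $\exists x\varphi(x)$ iff some numeral instance. Base paradoxicality. $\mathrm{PA}[\mathrm{SK}]$ is the two-sided sequent calculus for Strong Kleene logic with identity in $\mathcal L$ (initial sequents $\varphi\Rightarrow\varphi$, cut, weakening, the rule from $\Gamma\Rightarrow\Delta,\varphi$ infer $\neg\varphi,\Gamma\Rightarrow\Delta$, usual rules for $\wedge,\vee,\forall,\exists$, reflexivity $\Rightarrow t=t$, replacement from $\Gamma\Rightarrow\Delta,\varphi(t)$ infer $\Gamma\Rightarrow\Delta,s\neq t,\varphi(s)$) plus the initial sequents of Peano arithmetic and the induction rule for all $\mathcal L$-formulas. A sentence $\varphi$ is base paradoxical iff $\mathrm{PA}[\mathrm{SK}]$ derives $\varphi\Leftrightarrow\neg\mathrm T\varphi$ and $\neg\varphi\Leftrightarrow\mathrm T\varphi$ ($\Leftrightarrow$ meaning both sequents). $B(x)$ is an $\mathcal L_{\mathbb N}$-formula defining in $\mathbb N$ the set of codes of base paradoxical sentences, and $\Pi(x):=B(x)\vee B(\dot\neg x)$. Paradoxicality clauses. Let $\mathscr P(x)$ be the $\mathcal L$-formula which is the disjunction of: (1) $x$ codes a sentence and $\Pi(x)$; (2) $x$ codes a sentence $\mathrm Tt$ ($t$ a closed term) and $\mathrm P(\mathrm{val}(t))$; (3) $x$ codes a sentence $\neg\mathrm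 Tt$ and $\mathrm P(\mathrm{val}(t))$; (4) $x$ codes a sentence $\psi\wedge\theta$ and $(\mathrm P\psi\wedge\mathrm P\theta)\vee(\mathrm T\psi\wedge\mathrm P\theta)\vee(\mathrm T\theta\wedge\mathrm P\psi)$; (5) $x$ codes a sentence $\psi\vee\theta$ and $(\mathrm P\psi\wedge\mathrm P\theta)\vee(\neg\mathrm T\psi\wedge\mathrm P\theta)\vee(\neg\mathrm T\theta\wedge\mathrm P\psi)$; (6) $x$ codes a sentence $\forall v\psi$ and $\exists y\,\mathrm P\psi(\dot y)\wedge\forall y(\mathrm P\psi(\dot y)\vee\mathrm T\psi(\dot y))$; (7) $x$ codes a sentence $\exists v\psi$ and $\exists y\,\mathrm P\psi(\dot y)\wedge\forall y(\mathrm P\psi(\dot y)\vee\neg\mathrm T\psi(\dot y))$; here $\psi(\dot y)$ is the code of the result of substituting the numeral of $y$ for $v$. Write $\mathscr P(\varphi)$ for $\mathscr P(\ulcorner\varphi\urcorner)$. Modified sequence. Let $P_0^{*-}$ be the set of codes of the sentences $\mathrm P\ulcorner\varphi\urcorner$ for $\varphi$ an $\mathcal L$-formula. Define $\Gamma^*_{\mathscr{TP}}(T,P)=\big((\{\#\varphi:(\mathbb N,T,P)\models_{SK}\varphi\},\{\#\varphi:(\mathbb N,T,P)\models_{SK}\neg\varphi\}),(\{\#\varphi:(\mathbb N,T,P)\models_{SK}\mathscr P(\varphi)\},\{\#\varphi:(\mathbb N,T,P)\models_{SK}\varphi\vee\neg\varphi\}\cup P_0^{*-})\big)$, $\varphi$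 ranging over $\mathcal L$-sentences. Define $(T^*_0,P^*_0)=((\emptyset,\emptyset),(\emptyset,P_0^{*-}))$, $(T^*_{\xi+1},P^*_{\xi+1})=\Gamma^*_{\mathscr{TP}}(T^*_\xi,P^*_\xi)$, and $(T^*_\lambda,P^*_\lambda)=\bigcup_{\xi<\lambda}(T^*_\xi,P^*_\xi)$ (componentwise union) for limit $\lambda$; this monotone sequence reaches a least fixed point $(T^*_\infty,P^*_\infty)$ with $P^*_\infty=(P_\infty^{*+},P_\infty^{*-})$. *)

From mathcomp Require Import ssreflect ssrfun ssrbool eqtype ssrnat seq choice.
From Stdlib Require List.

Set Implicit Arguments.
Unset Strict Implicit.
Unset Printing Implicit Defensive.

(* Syntax of L = L_N u {T, P}, Tait style                              *)

Inductive term : Type :=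
| Var  of nat
| Zero
| Succ of term
| Plus of term & term
| Mult of term & term.

Inductive form : Type :=
| Eq   of term & term
| Neq  of term & term
| Tr   of term
| NTr  of term
| Pr   of term
| NPr  of term
| And  of form & form
| Or   of form & form
| All  of nat & form
| Ex   of nat & form.

Fixpoint neg (f : form) : form :=
  match f with
  | Eq s t => Neq s t | Neq s t => Eq s t
  | Tr t => NTr t | NTr t => Tr t
  | Pr t => NPr t | NPr t => Pr t
  | And a b => Or (neg a) (neg b)
  | Or a b => And (neg a) (neg b)
  | All v a => Ex v (neg a)
  | Ex v a => All v (neg a)
  end.

Fixpoint fvt (t : term) : seq nat :=
  match t with
  | Var n => [:: n]
  | Zero => [::]
  | Succ s => fvt s
  | Plus a b => fvt a ++ fvt b
  | Mult a b => fvt a ++ fvt b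
  end.

Fixpoint fv (f : form) : seq nat :=
  match f with
  | Eq s t | Neq s t => fvt s ++ fvt t
  | Tr t | NTr t | Pr t | NPr t => fvt t
  | And a b | Or a b => fv a ++ fv b
  | All v a | Ex v a => [seq y <- fv a | y != v]
  end.

Definition closed_term (t : term) : Prop := fvt t = [::].
Definition sentence (f : form) : Prop := fv f = [::].

Fixpoint subst_t (x : nat) (s t : term) : term :=
  match t with
  | Var n => if n == x then s else Var n
  | Zero => Zero
  | Succ u => Succ (subst_t x s u)
  | Plus a b => Plus (subst_t x s a) (subst_t x s b)
  | Mult a b => Mult (subst_t x s a) (subst_t x s b)
  end.

Fixpoint subst (x : nat) (s : term) (f : form) : form :=
  match f with
  | Eq a b => Eq (subst_t x s a) (subst_t x s b)
  | Neq a b => Neq (subst_t x s a) (subst_t x s b)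
  | Tr t => Tr (subst_t x s t)
  | NTr t => NTr (subst_t x s t)
  | Pr t => Pr (subst_t x s t)
  | NPr t => NPr (subst_t x s t)
  | And a b => And (subst x s a) (subst x s b)
  | Or a b => Or (subst x s a) (subst x s b)
  | All v a => if v == x then All v a else All v (subst x s a)
  | Ex v a => if v == x then Ex v a else Ex v (subst x s a)
  end.

Fixpoint free_for (x : nat) (s : term) (f : form) : bool :=
  match f with
  | And a b | Or a b => free_for x s a && free_for x s b
  | All v a | Ex v a =>
      (x \notin fv f) || ((v \notin fvt s) && free_for x s a)
  | _ => true
  end.

Definition num (n : nat) : term := iter n Succ Zero.

Fixpoint val (t : term) : nat :=
  match t with
  | Var _ => 0
  | Zero => 0
  | Succ s => (val s).+1
  | Plus a b => val a + val b
  | Mult a b => val a * val b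
  end.

Fixpoint tree_t (t : term) : GenTree.tree nat :=
  match t with
  | Var n => GenTree.Leaf n
  | Zero => GenTree.Node 0 [::]
  | Succ s => GenTree.Node 1 [:: tree_t s]
  | Plus a b => GenTree.Node 2 [:: tree_t a; tree_t b]
  | Mult a b => GenTree.Node 3 [:: tree_t a; tree_t b]
  end.

Fixpoint tree_f (f : form) : GenTree.tree nat :=
  match f with
  | Eq a b => GenTree.Node 10 [:: tree_t a; tree_t b]
  | Neq a b => GenTree.Node 11 [:: tree_t a; tree_t b]
  | Tr t => GenTree.Node 12 [:: tree_t t]
  | NTr t => GenTree.Node 13 [:: tree_t t]
  | Pr t => GenTree.Node 14 [:: tree_t t]
  | NPr t => GenTree.Node 15 [:: tree_t t]
  | And a b => GenTree.Node 16 [:: tree_f a; tree_f b]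
  | Or a b => GenTree.Node 17 [:: tree_f a; tree_f b]
  | All v a => GenTree.Node 18 [:: GenTree.Leaf v; tree_f a]
  | Ex v a => GenTree.Node 19 [:: GenTree.Leaf v; tree_f a]
  end.

Definition code (f : form) : nat := pickle (tree_f f).
Definition gq (f : form) : term := num (code f).

Record model : Type := Model {
  Tpos : nat -> Prop; Tneg : nat -> Prop;
  Ppos : nat -> Prop; Pneg : nat -> Prop }.

Inductive sat (M : model) : form -> Prop :=
| sat_eq  s t : val s = val t -> sat M (Eq s t)
| sat_neq s t : val s <> val t -> sat M (Neq s t)
| sat_T   t : Tpos M (val t) -> sat M (Tr t)
| sat_NT  t : Tneg M (val t) -> sat M (NTr t)
| sat_P   t : Ppos M (val t) -> sat M (Pr t)
| sat_NP  t : Pneg M (val t) -> sat M (NPr t)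
| sat_and a b : sat M a -> sat M b -> sat M (And a b)
| sat_orl a b : sat M a -> sat M (Or a b)
| sat_orr a b : sat M b -> sat M (Or a b)
| sat_all v a : (forall n, sat M (subst v (num n) a)) -> sat M (All v a)
| sat_ex  v a n : sat M (subst v (num n) a) -> sat M (Ex v a).

Definition sub_ctx (G G' : seq form) : Prop :=
  forall f, List.In f G -> List.In f G'.

Definition not_free_in (y : nat) (G : seq form) : Prop :=
  forall f, List.In f G -> y \notin fv f.

Inductive PAsk : seq form -> seq form -> Prop :=
| ax_id f : PAsk [:: f] [:: f]
| r_cut G D f : PAsk G (f :: D) -> PAsk (f :: G) D -> PAsk G D
| r_weak G D G' D' : PAsk G D -> sub_ctx G G' -> sub_ctx D D' -> PAsk G' D'
| r_neg G D f : PAsk G (f :: D) -> PAsk (neg f :: G) D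
| r_andL G D a b : PAsk (a :: b :: G) D -> PAsk (And a b :: G) D
| r_andR G D a b : PAsk G (a :: D) -> PAsk G (b :: D) -> PAsk G (And a b :: D)
| r_orL G D a b : PAsk (a :: G) D -> PAsk (b :: G) D -> PAsk (Or a b :: G) D
| r_orR G D a b : PAsk G (a :: b :: D) -> PAsk G (Or a b :: D)
| r_allL G D v a t : free_for v t a ->
    PAsk (subst v t a :: G) D -> PAsk (All v a :: G) D
| r_allR G D v a y : free_for v (Var y) a ->
    not_free_in y (All v a :: G ++ D) ->
    PAsk G (subst v (Var y) a :: D) -> PAsk G (All v a :: D)
| r_exL G D v a y : free_for v (Var y) a ->
    not_free_in y (Ex v a :: G ++ D) ->
    PAsk (subst v (Var y) a :: G) D -> PAsk (Ex v a :: G) D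
| r_exR G D v a t : free_for v t a ->
    PAsk G (subst v t a :: D) -> PAsk G (Ex v a :: D)
| r_refl t : PAsk [::] [:: Eq t t]
| r_repl G D v a s t : free_for v s a -> free_for v t a ->
    PAsk G (subst v t a :: D) -> PAsk G (Neq s t :: subst v s a :: D)
| pa_succ0 s : PAsk [::] [:: Neq (Succ s) Zero]
| pa_succinj s t : PAsk [:: Eq (Succ s) (Succ t)] [:: Eq s t]
| pa_plus0 s : PAsk [::] [:: Eq (Plus s Zero) s]
| pa_plusS s t : PAsk [::] [:: Eq (Plus s (Succ t)) (Succ (Plus s t))]
| pa_mult0 s : PAsk [::] [:: Eq (Mult s Zero) Zero]
| pa_multS s t : PAsk [::] [:: Eq (Mult s (Succ t)) (Plus (Mult s t) s)]
| r_ind G D x a t : not_free_in x (G ++ D) ->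
    free_for x (Succ (Var x)) a -> free_for x t a ->
    PAsk (a :: G) (subst x (Succ (Var x)) a :: D) ->
    PAsk (subst x Zero a :: G) (subst x t a :: D).

Definition PAsk_iff (f g : form) : Prop := PAsk [:: f] [:: g] /\ PAsk [:: g] [:: f].

Definition base_paradoxical (f : form) : Prop :=
  sentence f /\
  PAsk_iff f (neg (Tr (gq f))) /\ PAsk_iff (neg f) (Tr (gq f)).

Definition Bset (x : nat) : Prop :=
  exists f, x = code f /\ base_paradoxical f.

Definition dneg_rel (x y : nat) : Prop := exists f, x = code f /\ y = code (neg f).

Definition Pi (x : nat) : Prop := Bset x \/ exists y, dneg_rel x y /\ Bset y.

(* SK truth conditions of the L-formula  scriptP(x)  at x in (N,T,P)   *)

Definition scrP_sat (M : model) (x : nat) : Prop :=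
  (exists f, sentence f /\ x = code f /\ Pi x)
  \/ (exists t, closed_term t /\ x = code (Tr t) /\ Ppos M (val t))
  \/ (exists t, closed_term t /\ x = code (NTr t) /\ Ppos M (val t))
  \/ (exists a b, sentence (And a b) /\ x = code (And a b) /\
       ((Ppos M (code a) /\ Ppos M (code b)) \/
        (Tpos M (code a) /\ Ppos M (code b)) \/
        (Tpos M (code b) /\ Ppos M (code a))))
  \/ (exists a b, sentence (Or a b) /\ x = code (Or a b) /\
       ((Ppos M (code a) /\ Ppos M (code b)) \/
        (Tneg M (code a) /\ Ppos M (code b)) \/
        (Tneg M (code b) /\ Ppos M (code a))))
  \/ (exists v a, sentence (All v a) /\ x = code (All v a) /\
       (exists y, Ppos M (code (subst v (num y) a))) /\
       (forall y, Ppos M (code (subst v (num y) a)) \/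
                  Tpos M (code (subst v (num y) a))))
  \/ (exists v a, sentence (Ex v a) /\ x = code (Ex v a) /\
       (exists y, Ppos M (code (subst v (num y) a))) /\
       (forall y, Ppos M (code (subst v (num y) a)) \/
                  Tneg M (code (subst v (num y) a)))).

Definition P0neg (n : nat) : Prop := exists f, n = code (Pr (gq f)).

Definition GammaStar (M : model) : model :=
  Model
    (fun n => exists f, sentence f /\ n = code f /\ sat M f)
    (fun n => exists f, sentence f /\ n = code f /\ sat M (neg f))
    (fun n => exists f, sentence f /\ n = code f /\ scrP_sat M (code f))
    (fun n => (exists f, sentence f /\ n = code f /\ sat M (Or f (neg f)))
              \/ P0neg n).

Definition M0 : model := Model (fun _ => False) (fun _ => False)
                               (fun _ => False) P0neg.

Definition meq (M N : model) : Prop :=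
  (forall n, Tpos M n <-> Tpos N n) /\ (forall n, Tneg M n <-> Tneg N n) /\
  (forall n, Ppos M n <-> Ppos N n) /\ (forall n, Pneg M n <-> Pneg N n).

Definition union_below (A : Type) (lt : A -> A -> Prop) (S : A -> model) (a : A)
  : model :=
  Model (fun n => exists b, lt b a /\ Tpos (S b) n)
        (fun n => exists b, lt b a /\ Tneg (S b) n)
        (fun n => exists b, lt b a /\ Ppos (S b) n)
        (fun n => exists b, lt b a /\ Pneg (S b) n).

(* (A, lt) is a well-order, i.e. (isomorphic to) an ordinal *)
Definition well_order (A : Type) (lt : A -> A -> Prop) : Prop :=
  well_founded lt /\ (forall a b c, lt a b -> lt b c -> lt a c) /\
  (forall a b, lt a b \/ a = b \/ lt b a).

Definition modified_sequence (A : Type) (lt : A -> A -> Prop) (S : A -> model)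
  : Prop :=
  (forall a, (forall b, ~ lt b a) -> meq (S a) M0) /\
  (forall a b, lt b a -> (forall c, ~ (lt b c /\ lt c a)) ->
     meq (S a) (GammaStar (S b))) /\
  (forall a, (exists b, lt b a) ->
     (forall b, lt b a -> exists c, lt b c /\ lt c a) ->
     meq (S a) (union_below lt S a)).

(* A code of P t or of ~P t can enter the positive extension of P only through
   clause (1) of scriptP: clauses (2)-(7) ask for codes of T-literals or of
   compound sentences, and the coding is injective.  Clause (1) would make P t or
   ~P t base paradoxical.  But PA[SK] is sound for classical models in which T and
   P denote arbitrary sets of numbers; with T = P = N the sentence P t is true and
   ~T<P t> false, and with T = N, P = empty the same holds for ~P t, so neither
   phi => ~T<phi> is derivable.  Hence Gamma* never puts these codes into P+, and
   since stage 0 has empty P+ and limit stages are unions, no stage does. *)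

From Stdlib Require Import Classical.
From Pilot Require Import Defs.
From mathcomp Require Import ssreflect ssrfun ssrbool eqtype ssrnat seq choice.

Set Implicit Arguments.
Unset Strict Implicit.
Unset Printing Implicit Defensive.

Fixpoint tval (e : nat -> nat) (t : term) : nat :=
  match t with
  | Var n => e n
  | Zero => 0
  | Succ s => (tval e s).+1
  | Plus a b => tval e a + tval e b
  | Mult a b => tval e a * tval e b
  end.

Definition update (e : nat -> nat) (x n : nat) : nat -> nat :=
  fun y => if y == x then n else e y.

Lemma update_eq e x n : update e x n x = n.
Proof. by rewrite /update eqxx. Qed.

Lemma update_id e x n y : y != x -> update e x n y = e y.
Proof. by rewrite /update => /negbTE ->. Qed.

Lemma update_update e x n m : update (update e x n) x m =1 update e x m.
Proof. by move=> y; rewrite /update; case: eqP. Qed.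

Lemma update_comm e x y n m : x != y ->
  update (update e x n) y m =1 update (update e y m) x n.
Proof.
move=> neq_xy z; rewrite /update.
by have [->|//] := eqVneq z y; rewrite eq_sym (negbTE neq_xy).
Qed.

Lemma tval_eq_on e e' t : {in fvt t, e =1 e'} -> tval e t = tval e' t.
Proof.
elim: t => [n||s IH|a IHa b IHb|a IHa b IHb] /= eq_ee'.
- by apply: eq_ee'; rewrite inE.
- by [].
- by rewrite IH.
- by rewrite IHa ?IHb // => y y_in; apply: eq_ee'; rewrite mem_cat y_in ?orbT.
- by rewrite IHa ?IHb // => y y_in; apply: eq_ee'; rewrite mem_cat y_in ?orbT.
Qed.

Lemma tval_subst e x s t : tval e (subst_t x s t) = tval (update e x (tval e s)) t.
Proof.
by elim: t => [n||u /= ->|a /= -> b ->|a /= -> b ->] //=; rewrite /update; case: eqP.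
Qed.

Lemma subst_t_notin x s t : x \notin fvt t -> subst_t x s t = t.
Proof.
elim: t => [n||u IH|a IHa b IHb|a IHa b IHb] /=.
- by rewrite inE eq_sym => /negbTE ->.
- by [].
- by move/IH ->.
- by rewrite mem_cat negb_or => /andP[/IHa -> /IHb ->].
- by rewrite mem_cat negb_or => /andP[/IHa -> /IHb ->].
Qed.

Lemma subst_notin x s f : x \notin fv f -> subst x s f = f.
Proof.
elim: f => [a b|a b|t|t|t|t|a IHa b IHb|a IHa b IHb|v a IHa|v a IHa] /=;
  rewrite ?mem_cat ?negb_or.
- by case/andP => /subst_t_notin -> /subst_t_notin ->.
- by case/andP => /subst_t_notin -> /subst_t_notin ->.
- by move/subst_t_notin ->.
- by move/subst_t_notin ->.
- by move/subst_t_notin ->.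
- by move/subst_t_notin ->.
- by case/andP => /IHa -> /IHb ->.
- by case/andP => /IHa -> /IHb ->.
- have [//|neq_vx] := eqVneq v x.
  by rewrite mem_filter eq_sym neq_vx => /IHa ->.
- have [//|neq_vx] := eqVneq v x.
  by rewrite mem_filter eq_sym neq_vx => /IHa ->.
Qed.

Lemma free_for_closed x s f : closed_term s -> free_for x s f.
Proof.
by move=> cl_s; elim: f => //= [a -> b ->|a -> b ->|v a ->|v a ->] //;
  rewrite cl_s orbT.
Qed.

Section ClassicalModel.

Variables T P : nat -> Prop.

Fixpoint holds (e : nat -> nat) (f : form) : Prop :=
  match f with
  | Eq s t => tval e s = tval e t
  | Neq s t => tval e s <> tval e t
  | Tr t => T (tval e t)
  | NTr t => ~ T (tval e t)
  | Pr t => P (tval e t)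
  | NPr t => ~ P (tval e t)
  | And a b => holds e a /\ holds e b
  | Or a b => holds e a \/ holds e b
  | All v a => forall n, holds (update e v n) a
  | Ex v a => exists n, holds (update e v n) a
  end.

Lemma holds_neg e f : holds e (neg f) <-> ~ holds e f.
Proof.
elim: f e => [s t|s t|t|t|t|t|a IHa b IHb|a IHa b IHb|v a IHa|v a IHa] e /=;
  try by [tauto | split=> [? []|/NNPP]].
- rewrite IHa IHb; tauto.
- rewrite IHa IHb; tauto.
- split=> [[n /IHa nHa] Ha|nHa]; first exact: nHa.
  by apply: NNPP => nEx; apply: nHa => n; apply: NNPP => /IHa nHa; apply: nEx; exists n.
- split=> [nHa [n]|nEx n]; first exact/IHa.
  by apply/IHa => Ha; apply: nEx; exists n.
Qed.

(* [fv (Ex v a)] is convertible to [fv (All v a)], so hypotheses stated with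
   [All] also serve existentials. *)
Lemma update_eq_on e e' v a n : {in fv (All v a), e =1 e'} ->
  {in fv a, update e v n =1 update e' v n}.
Proof.
move=> eq_ee' y y_in; rewrite /update; case: eqP => // /eqP neq_yv.
by apply: eq_ee'; rewrite mem_filter neq_yv.
Qed.

Lemma holds_eq_on e e' f : {in fv f, e =1 e'} -> holds e f <-> holds e' f.
Proof.
elim: f e e' => [s t|s t|t|t|t|t|a IHa b IHb|a IHa b IHb|v a IHa|v a IHa] e e' /=
  eq_ee'; try by rewrite !(@tval_eq_on e e') // => y y_in; apply: eq_ee';
  rewrite ?mem_cat y_in ?orbT.
- by rewrite (IHa e e') ?(IHb e e') // => y y_in; apply: eq_ee';
    rewrite mem_cat y_in ?orbT.
- by rewrite (IHa e e') ?(IHb e e') // => y y_in; apply: eq_ee';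
    rewrite mem_cat y_in ?orbT.
- by split=> Ha n; apply/(IHa _ _ (update_eq_on n eq_ee')).
- by split=> -[n Ha]; exists n; apply/(IHa _ _ (update_eq_on n eq_ee')).
Qed.

Lemma holds_eq e e' f : e =1 e' -> holds e f <-> holds e' f.
Proof. by move=> eq_ee'; apply: holds_eq_on => y _. Qed.

Lemma holds_update_notin e x n f : x \notin fv f ->
  holds (update e x n) f <-> holds e f.
Proof.
move=> x_out; apply: holds_eq_on => y y_in.
by apply: update_id; apply: contraNneq x_out => <-.
Qed.

Lemma holds_subst_binder x s v a e n : x != v -> v \notin fvt s ->
  (forall e, holds e (subst x s a) <-> holds (update e x (tval e s)) a) ->
  holds (update e v n) (subst x s a) <-> holds (update (update e x (tval e s)) v n) a.
Proof.
move=> neq_xv v_out IH; rewrite IH.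
have -> : tval (update e v n) s = tval e s.
  by apply: tval_eq_on => y y_in; apply: update_id; apply: contraNneq v_out => <-.
by symmetry; apply: holds_eq; apply: update_comm.
Qed.

Lemma holds_subst x s f e : free_for x s f ->
  holds e (subst x s f) <-> holds (update e x (tval e s)) f.
Proof.
elim: f e => [a b|a b|t|t|t|t|a IHa b IHb|a IHa b IHb|v a IHa|v a IHa] e ff;
  try by rewrite /= ?tval_subst.
- by case/andP: ff => /= /IHa -> /IHb ->.
- by case/andP: ff => /= /IHa -> /IHb ->.
all: have [x_out|] := boolP (x \notin [seq y <- fv a | y != v]);
  first by rewrite subst_notin // holds_update_notin.
all: rewrite negbK => x_in; case/orP: ff => [/negP//|/andP[v_out ff_a]].
all: have neq_xv : x != v by move: x_in; rewrite mem_filter => /andP[].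
all: rewrite /= eq_sym (negbTE neq_xv) /=.
all: have bodyE n := holds_subst_binder e n neq_xv v_out (fun e => IHa e ff_a).
- by split=> Ha n; move: (Ha n); rewrite bodyE.
- by split=> -[n Ha]; exists n; [rewrite -bodyE | rewrite bodyE].
Qed.

Definition valid (G D : seq form) : Prop :=
  forall e, (forall f, List.In f G -> holds e f) -> exists2 f, List.In f D & holds e f.

Lemma not_free_in_cons y f G :
  not_free_in y (f :: G) -> y \notin fv f /\ not_free_in y G.
Proof. by move=> y_fG; split=> [|g g_in]; apply: y_fG; [left|right]. Qed.

Lemma not_free_in_cat y G D :
  not_free_in y (G ++ D) -> not_free_in y G /\ not_free_in y D.
Proof.
by move=> y_GD; split=> f f_in; apply: y_GD; apply: List.in_or_app; [left|right].
Qed.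

Lemma holds_update_not_free_in G y n e f : not_free_in y G -> List.In f G ->
  holds (update e y n) f <-> holds e f.
Proof. by move=> y_G /y_G; apply: holds_update_notin. Qed.

Lemma holds_subst_var v y a e n : free_for v (Var y) a -> y \notin fv (All v a) ->
  holds (update e y n) (subst v (Var y) a) <-> holds (update e v n) a.
Proof.
move=> ff y_out; rewrite holds_subst //= update_eq.
apply: holds_eq_on => z z_a; rewrite /update; case: eqP => // /eqP neq_zv.
by case: eqP => // eq_zy; move: y_out; rewrite -eq_zy /= mem_filter neq_zv z_a.
Qed.

Lemma valid_allR G D v a y : free_for v (Var y) a ->
  not_free_in y (All v a :: G ++ D) ->
  valid G (subst v (Var y) a :: D) -> valid G (All v a :: D).
Proof.
move=> ff /not_free_in_cons[y_a /not_free_in_cat[y_G y_D]] IH e HG.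
case: (classic (exists2 f, List.In f D & holds e f)) => [[f f_D Hf]|no_D].
  by exists f; [right|].
exists (All v a); [by left | move=> n].
have [f [<-|f_D] Hf] := IH (update e y n) (fun f f_G =>
  (holds_update_not_free_in n e y_G f_G).2 (HG f f_G)).
  by move: Hf; rewrite holds_subst_var.
by case: no_D; exists f; rewrite // -(holds_update_not_free_in n e y_D f_D).
Qed.

Lemma valid_exL G D v a y : free_for v (Var y) a ->
  not_free_in y (Ex v a :: G ++ D) ->
  valid (subst v (Var y) a :: G) D -> valid (Ex v a :: G) D.
Proof.
move=> ff /not_free_in_cons[y_a /not_free_in_cat[y_G y_D]] IH e HG.
have [n Ha] := HG _ (or_introl erefl).
have [f f_D Hf] : exists2 f, List.In f D & holds (update e y n) f.
  apply: IH => f [<-|f_G]; first by rewrite holds_subst_var.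
  by rewrite (holds_update_not_free_in n e y_G f_G); apply: HG; right.
by exists f; rewrite // -(holds_update_not_free_in n e y_D f_D).
Qed.

Lemma valid_ind G D x a t : not_free_in x (G ++ D) ->
  free_for x (Succ (Var x)) a -> free_for x t a ->
  valid (a :: G) (subst x (Succ (Var x)) a :: D) ->
  valid (subst x Zero a :: G) (subst x t a :: D).
Proof.
move=> /not_free_in_cat[x_G x_D] ff_succ ff_t IH e HG.
case: (classic (exists2 f, List.In f D & holds e f)) => [[f f_D Hf]|no_D].
  by exists f; [right|].
suff Ha n : holds (update e x n) a.
  by exists (subst x t a); rewrite ?holds_subst //; left.
elim: n => [|n IHn].
  by move: (HG _ (or_introl erefl)); rewrite holds_subst //; apply: free_for_closed.
have [f [<-|f_D] Hf] : exists2 f, List.In f (subst x (Succ (Var x)) a :: D) &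
    holds (update e x n) f.
  apply: IH => f [<-|f_G] //.
  by rewrite (holds_update_not_free_in n e x_G f_G); apply: HG; right.
  move: Hf; rewrite holds_subst //= update_eq.
  by apply: (holds_eq _ (update_update _ _ _ _)).1.
by case: no_D; exists f; rewrite // -(holds_update_not_free_in n e x_D f_D).
Qed.

Lemma valid_axiom f : (forall e, holds e f) -> valid [::] [:: f].
Proof. by move=> Hf e _; exists f; [left|]. Qed.

Theorem PAsk_sound G D : PAsk G D -> valid G D.
Proof.
elim=> {G D}.
- by move=> f e HG; exists f; [left | apply: HG; left].
- move=> G D f _ IH1 _ IH2 e HG.
  have [g [<-|g_D] Hg] := IH1 e HG; last by exists g.
  by apply: IH2 => h [<-|/HG].
- move=> G D G' D' _ IH sG sD e HG.
  by have [g /sD g_D' Hg] := IH e (fun f f_G => HG f (sG f f_G)); exists g.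
- move=> G D f _ IH e HG.
  have /holds_neg nHf := HG _ (or_introl erefl).
  by have [g [<-|g_D] Hg] := IH e (fun g g_G => HG g (or_intror g_G)); last exists g.
- move=> G D a b _ IH e HG; have [Ha Hb] := HG _ (or_introl erefl).
  by apply: IH => f [<-|[<-|f_G]] //; apply: HG; right.
- move=> G D a b _ IH1 _ IH2 e HG.
  have [f [<-|f_D] Hf] := IH1 e HG; last by exists f; [right|].
  have [g [<-|g_D] Hg] := IH2 e HG; last by exists g; [right|].
  by exists (And a b); [left|].
- move=> G D a b _ IH1 _ IH2 e HG.
  by case: (HG _ (or_introl erefl)) => Hab; [apply: IH1 | apply: IH2] => f [<-|f_G] //;
    apply: HG; right.
- move=> G D a b _ IH e HG.
  have [f [<-|[<-|f_D]] Hf] := IH e HG; last by exists f; [right|].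
    by exists (Or a b); [left | left].
  by exists (Or a b); [left | right].
- move=> G D v a t ff _ IH e HG.
  apply: IH => f [<-|f_G]; last by apply: HG; right.
  by rewrite holds_subst //; apply: (HG _ (or_introl erefl)).
- by move=> G D v a y ff y_fresh _; apply: valid_allR.
- by move=> G D v a y ff y_fresh _; apply: valid_exL.
- move=> G D v a t ff _ IH e HG.
  have [f [<-|f_D] Hf] := IH e HG; last by exists f; [right|].
  by exists (Ex v a); [left | exists (tval e t); rewrite -holds_subst].
- by move=> t; apply: valid_axiom.
- move=> G D v a s t ff_s ff_t _ IH e HG.
  have [f [<-|f_D] Hf] := IH e HG; last by exists f; [do 2 right|].
  have [eq_st|neq_st] := eqVneq (tval e s) (tval e t).
    by exists (subst v s a); [right; left | rewrite holds_subst // eq_st -holds_subst].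
  by exists (Neq s t); [left | apply/eqP].
- by move=> s; apply: valid_axiom.
- by move=> s t e HG; exists (Eq s t); [left | case: (HG _ (or_introl erefl))].
- by move=> s; apply: valid_axiom => e /=; rewrite addn0.
- by move=> s t; apply: valid_axiom => e /=; rewrite addnS.
- by move=> s; apply: valid_axiom => e /=; rewrite muln0.
- by move=> s t; apply: valid_axiom => e /=; rewrite mulnS addnC.
- by move=> G D x a t x_fresh ff_succ ff_t _; apply: valid_ind.
Qed.

End ClassicalModel.

Lemma tree_t_inj : injective tree_t.
Proof.
elim=> [n||s IH|a IHa b IHb|a IHa b IHb] [m||s'|a' b'|a' b'] //=.
- by case=> ->.
- by case=> /IH ->.
- by case=> /IHa -> /IHb ->.
- by case=> /IHa -> /IHb ->.
Qed.

Lemma tree_f_inj : injective tree_f.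
Proof.
elim=> [a b|a b|t|t|t|t|a IHa b IHb|a IHa b IHb|v a IHa|v a IHa]
  [a' b'|a' b'|t'|t'|t'|t'|a' b'|a' b'|v' a'|v' a'] //=;
  by [case=> /tree_t_inj -> /tree_t_inj -> | case=> /tree_t_inj ->
     | case=> /IHa -> /IHb -> | case=> -> /IHa ->].
Qed.

Lemma code_inj : injective code.
Proof. by move=> f g /(pcan_inj pickleK) /tree_f_inj. Qed.

Lemma val_num n : Defs.val (num n) = n.
Proof. by elim: n => //= n ->. Qed.

Definition P_literal (f : form) : bool :=
  match f with Pr _ | NPr _ => true | _ => false end.

Lemma P_literal_neg f : P_literal (neg f) = P_literal f.
Proof. by case: f. Qed.

Lemma valid_single_holds T P f g e :
  valid T P [:: f] [:: g] -> holds T P e f -> holds T P e g.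
Proof.
move=> fg Hf; have [h [<-|[]] //] : exists2 h, List.In h [:: g] & holds T P e h.
by apply: fg => h [<-|[]].
Qed.

Lemma P_literal_not_base_paradoxical f : P_literal f -> ~ base_paradoxical f.
Proof.
case: f => // t _ [_ [[/PAsk_sound fg _] _]].
- exact: (valid_single_holds (fg (fun _ => True) (fun _ => True)) (e := fun _ => 0)).
- exact: (valid_single_holds (fg (fun _ => True) (fun _ => False)) (e := fun _ => 0)).
Qed.

Lemma Ppos_GammaStar_P_literal M f : P_literal f -> ~ Ppos (GammaStar M) (code f).
Proof.
move=> Pf [f0 [_ [/code_inj <- scrP]]].
have code_P_literal h : code f = code h -> P_literal h by move/code_inj <-.
case: scrP => [[_ [_ [_ Pi_f]]]|].
  case: Pi_f => [[g [/code_inj <-]]|[y [[g [/code_inj <- ->]] [h [/code_inj <-]]]]].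
    exact: P_literal_not_base_paradoxical.
  by apply: P_literal_not_base_paradoxical; rewrite P_literal_neg.
do 2 case=> [[t [_ [/code_P_literal //]]]|].
do 3 case=> [[a [b [_ [/code_P_literal //]]]]|].
by case=> [a [b [_ [/code_P_literal]]]].
Qed.

Lemma zero_succ_or_limit A (lt : A -> A -> Prop) a :
  (forall b, ~ lt b a) \/
  (exists2 b, lt b a & forall c, ~ (lt b c /\ lt c a)) \/
  ((exists b, lt b a) /\ forall b, lt b a -> exists c, lt b c /\ lt c a).
Proof.
case: (classic (exists b, lt b a)) => [a_pos|a_min]; last first.
  by left => b lt_ba; apply: a_min; exists b.
right; case: (classic (exists2 b, lt b a & forall c, ~ (lt b c /\ lt c a)));
  first by left.
move=> no_pred.
right; split=> // b lt_ba; apply: NNPP => no_between; apply: no_pred.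
by exists b => // c between; apply: no_between; exists c.
Qed.

Lemma modified_sequence_Ppos_avoid A (lt : A -> A -> Prop) (S : A -> model)
    (X : nat -> Prop) :
  well_founded lt -> modified_sequence lt S ->
  (forall M n, X n -> ~ Ppos (GammaStar M) n) ->
  forall a n, X n -> ~ Ppos (S a) n.
Proof.
move=> wf [S_zero [S_succ S_limit]] X_Gamma a.
elim/(well_founded_ind wf): a => a IH n Xn.
have [a_min|[[b lt_ba b_pred]|[a_pos a_limit]]] := zero_succ_or_limit lt a.
- by have [_ [_ [-> _]]] := S_zero a a_min.
- have [_ [_ [-> _]]] := S_succ a b lt_ba b_pred; exact: X_Gamma.
- have [_ [_ [-> _]]] := S_limit a a_pos a_limit.
  by case=> b [lt_ba]; apply: IH.
Qed.

Lemma sat_Or_inv M f g : sat M (Or f g) -> sat M f \/ sat M g.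
Proof. by move=> H; inversion H; [left | right]. Qed.

Lemma sat_Pr_inv M t : sat M (Pr t) -> Ppos M (Defs.val t).
Proof. by move=> H; inversion H. Qed.

Theorem mainTheorem13 :
  forall (A : Type) (lt : A -> A -> Prop) (S : A -> model),
    well_order lt -> modified_sequence lt S ->
    (forall (a : A) (t : term), closed_term t ->
       ~ sat (S a) (Or (Pr (gq (Pr t))) (Pr (gq (NPr t))))) /\
    (forall a : A, meq (GammaStar (S a)) (S a) ->
       forall n, P0neg n -> ~ Ppos (S a) n).
Proof.
move=> A lt S [wf _] S_seq.
have avoid a f : P_literal f -> ~ Ppos (S a) (code f).
  move=> Pf; apply: (modified_sequence_Ppos_avoid
    (X := fun n => exists2 f, P_literal f & n = code f) wf S_seq); last by exists f.
  by move=> M _ [g Pg ->]; apply: Ppos_GammaStar_P_literal.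
split=> [a t _ /sat_Or_inv [] /sat_Pr_inv | a _ _ [f ->]]; rewrite ?/gq ?val_num;
  exact: avoid.
Qed.
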